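(* Let $p>2$ be a prime and $n>2$ an integer, and let $G(p,n)=\langle x,y\mid x^{p^n}=1,\ y^{p^{n-1}}=1,\ yxy^{-1}=x^{p+1}\rangle\cong\mathbb{Z}_{p^n}\rtimes\mathbb{Z}_{p^{n-1}}$. Then $G(p,n)$ is a finite nilpotent group of nilpotency class at least $n-1$, and $[e]_\varphi$ is a subgroup of $G(p,n)$ for every inner automorphism $\varphi$ of $G(p,n)$. Consequently, if $p_n$ denotes the $n$-th prime, the direct product $G=\prod_{n>2}G(p_n,n)$ is a residually nilpotent, non-nilpotent group such that $[e]_\varphi$ is a subgroup of $G$ for every inner automorphism $\varphi$ of $G$.
   Context: For an automorphism $\varphi$ of a group $G$, $[e]_\varphi=\{z^{-1}\varphi(z)\mid z\in G\}$. A group $G$ is residually nilpotent if $\bigcap_k\gamma_k(G)=\{e\}$, where $\gamma_1(G)=G$, $\gamma_{k+1}(G)=[\gamma_k(G),G]$, $[x,y]=x^{-1}y^{-1}xy$. *)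

From HB Require Import structures.
From mathcomp Require Import all_boot all_fingroup all_solvable.
Set Implicit Arguments. Unset Strict Implicit. Unset Printing Implicit Defensive.

Lemma next_prime_ex (m : nat) : exists p, [pred q | prime q && (m < q)] p.
Proof. by case: (prime_above m) => p Hm Hp; exists p; rewrite /= Hp Hm. Qed.

Definition next_prime (m : nat) : nat := ex_minn (next_prime_ex m).

(* nth_prime n = p_n, the n-th prime (for n >= 1) *)
Definition nth_prime (n : nat) : nat := iter n next_prime 1.

(* A group is given by a carrier type T with operations mul, inv, one.
   The whole carrier is the group. *)
Section AbstractGroup.
Variables (T : Type) (mul : T -> T -> T) (inv : T -> T) (one : T).

Definition acomm (x y : T) : T := mul (mul (mul (inv x) (inv y)) x) y.

Inductive agen (S : T -> Prop) : T -> Prop :=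
  | agen_one : agen S one
  | agen_in x : S x -> agen S x
  | agen_mul x y : agen S x -> agen S y -> agen S (mul x y)
  | agen_inv x : agen S x -> agen S (inv x).

(* lower central series: lcs 0 = gamma_1(G) = G,
   lcs k.+1 = gamma_{k+2}(G) = [gamma_{k+1}(G), G] *)
Fixpoint lcs (k : nat) : T -> Prop :=
  match k with
  | 0 => fun _ => True
  | k'.+1 => agen (fun t => exists a b, lcs k' a /\ t = acomm a b)
  end.

Definition is_subgroup (S : T -> Prop) : Prop :=
  [/\ S one, (forall x y, S x -> S y -> S (mul x y)) & (forall x, S x -> S (inv x))].

Definition anilpotent : Prop := exists k, forall x, lcs k x -> x = one.

Definition aresidually_nilpotent : Prop :=
  forall x, (forall k, lcs k x) -> x = one.

Definition ainner (g : T) : T -> T := fun z => mul (mul g z) (inv g).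

Definition twisted_class_e (phi : T -> T) : T -> Prop :=
  fun t => exists z, t = mul (inv z) (phi z).

End AbstractGroup.

Section DirectProduct.
Variable gT : nat -> finGroupType.
Definition dprodT := forall k : nat, gT k.
Definition dprod_mul (f g : dprodT) : dprodT := fun k => (f k * g k)%g.
Definition dprod_inv (f : dprodT) : dprodT := fun k => ((f k)^-1)%g.
Definition dprod_one : dprodT := fun k => 1%g.
End DirectProduct.

Definition twisted_class_inner (gT : finGroupType) (G : {set gT}) (g : gT) : {set gT} :=
  [set (z^-1 * (g * z * g^-1))%g | z in G].

From Stdlib Require Import FunctionalExtensionality.
From HB Require Import structures.
From mathcomp Require Import all_boot all_fingroup all_solvable zmodp.
From mathcomp Require Import zify.
Set Implicit Arguments. Unset Strict Implicit. Unset Printing Implicit Defensive.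
Local Open Scope group_scope.

(* G(p,n) is the semidirect product <[x]> ><| <[w]> with x ^ w = x ^+ p.+1, of
   order p ^ (2n - 1).  Since [~ x ^+ m, w] = x ^+ (m * p), the power
   x ^+ (p ^ k) lies in 'L_k.+1(G), and it is nontrivial for k = n - 2, which
   bounds the class from below.  For g = x ^+ c * w ^+ d the map
   z |-> z^-1 * (g * z * g^-1) sends w ^+ b * u, with u in <[x]>, to
   x ^+ (c * ((p + 1) ^ b - 1)) times a homomorphic image of u, all inside the
   abelian group <[x]>.  As p + 1 has order p ^ (n - 1) modulo p ^ n, its powers
   are all the residues congruent to 1 modulo p, so the first factors are closed
   under products and the image [e]_phi is a subgroup.  In the unrestricted
   product the lower central series is computed componentwise: every factor is
   nilpotent, but the factor G(p_(k+3), k + 3) has class at least k + 2. *)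

Lemma expS_mod (p k : nat) : p.+1 ^ k = 1 %[mod p].
Proof. by rewrite -modnXm -[p.+1]add1n modnDr modnXm exp1n. Qed.

Section PowersOfSuccPrime.

Variables p n : nat.
Hypotheses (p_pr : prime p) (p_odd : odd p) (n_gt1 : 1 < n).

Let p_gt1 : 1 < p := prime_gt1 p_pr.
Let pn_gt1 : 1 < p ^ n.
Proof. by rewrite -(expn0 p) ltn_exp2l // ltnW. Qed.
Let b : 'Z_(p ^ n) := Zp1.
Let order_b : #[b] = (p ^ n)%N.
Proof. by rewrite order_Zp1 Zp_cast. Qed.

Lemma Aut_Zp1_expS :
  exists s, [/\ s \in Aut <[b]>, #[s] = (p ^ n.-1)%N & s b = b ^+ p.+1].
Proof.
have pB : p.-group <[b]> by rewrite /pgroup -orderE order_b pnatX pnat_id.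
have ntB : <[b]> != 1 by rewrite -cardG_gt1 -orderE order_b.
have := cyclic_pgroup_Aut_structure pB (cycle_cyclic b) ntB.
rewrite /= -orderE order_b pfactorK //.
case=> m [[mE _ _ _ _] _]; rewrite -subn1 subn_eq0 leqNgt n_gt1 subn1.
case=> t [_ _ _]; rewrite p_odd; case=> _ [s [As os ms _]] _.
exists s; split=> //.
rewrite -(mE s b As (cycle_id b)) ms val_Zp_nat // expg_mod //.
by apply/eqP; rewrite -order_dvdn order_b.
Qed.

Lemma expS_eq_mod k1 k2 :
  (p.+1 ^ k1 == p.+1 ^ k2 %[mod p ^ n]) = (k1 == k2 %[mod p ^ n.-1]).
Proof.
have [s [As os sb]] := Aut_Zp1_expS.
have sXb k : (s ^+ k) b = b ^+ (p.+1 ^ k).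
  elim: k => [|k IHk]; first by rewrite expg0 perm1 expn0 expg1.
  rewrite expgSr permM IHk -(autmE As) morphX ?cycle_id //= autmE // sb.
  by rewrite -expgM expnS.
rewrite -order_b -eq_expg_mod_order -!sXb -os -eq_expg_mod_order.
apply/eqP/eqP => [sbE | -> //]; apply: eq_Aut (groupX _ As) (groupX _ As) _.
move=> _ /cycleP[i ->].
by rewrite -!(autmE (groupX _ As)) !morphX ?cycle_id //= !autmE ?groupX ?sbE.
Qed.

Lemma expS_mod_onto t : t = 1 %[mod p] -> exists k, p.+1 ^ k = t %[mod p ^ n].
Proof.
(* A residue congruent to 1 modulo p is determined modulo p ^ n by its digit
   (m %% p ^ n) %/ p < p ^ n.-1, so k |-> digit (p.+1 ^ k) injects 'I_N into
   itself and is therefore onto. *)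
move=> t1; pose N := (p ^ n.-1)%N.
have pnE : (p ^ n = N * p)%N by rewrite -expnSr prednK // ltnW.
pose digit m := (m %% p ^ n) %/ p.
have digit_lt m : digit m < N.
  by rewrite ltn_divLR ?prime_gt0 // -pnE ltn_pmod // ltnW.
have digitK m1 m2 : m1 = 1 %[mod p] -> m2 = 1 %[mod p] ->
    digit m1 = digit m2 -> m1 = m2 %[mod p ^ n].
  have dvd_p_pn : p %| p ^ n by rewrite pnE dvdn_mull.
  move=> e1 e2 e; rewrite (divn_eq (m1 %% _) p) (divn_eq (m2 %% _) p) -/(digit _).
  by rewrite -/(digit m2) e !modn_dvdm // e1 e2.
pose f (k : 'I_N) : 'I_N := Ordinal (digit_lt (p.+1 ^ k)%N).
have f_inj : injective f.
  move=> k1 k2 /(congr1 val)/(digitK _ _ (expS_mod _ _) (expS_mod _ _))/eqP.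
  by rewrite expS_eq_mod !modn_small // => /eqP/val_inj.
have [k /(congr1 val) fk] := codomP (injF_onto f_inj (Ordinal (digit_lt t))).
by exists k; apply: digitK (expS_mod _ _) t1 _.
Qed.

Lemma expS_addn_mod b1 b2 :
  exists b3, p.+1 ^ b1 + p.+1 ^ b2 = p.+1 ^ b3 + 1 %[mod p ^ n].
Proof.
have /eqP dvd_p : p %| p.+1 ^ b2 - 1 by rewrite -eqn_mod_dvd ?expn_gt0 ?expS_mod.
have [|b3 e] := expS_mod_onto (t := p.+1 ^ b1 + (p.+1 ^ b2 - 1))%N.
  by rewrite -modnDm dvd_p addn0 modn_mod expS_mod.
by exists b3; rewrite -[in RHS]modnDml e modnDml -addnA subnK // expn_gt0.
Qed.

End PowersOfSuccPrime.

Section TwistedConjugation.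

Variables (gT : finGroupType) (A : {group gT}) (g : gT).
Hypotheses (cAA : abelian A) (nAg : g \in 'N(A)).

Definition twisted_conj (z : gT) : gT := z^-1 * (g * z * g^-1).

Lemma twisted_conj_mem u : u \in A -> twisted_conj u \in A.
Proof.
move=> Au; rewrite groupM ?groupV //.
have -> : g * u * g^-1 = u ^ g^-1 by rewrite conjgE invgK mulgA.
by rewrite memJ_norm ?groupV.
Qed.

Lemma twisted_conjM v u :
  twisted_conj v \in A -> u \in A -> twisted_conj (v * u) = twisted_conj v * twisted_conj u.
Proof.
move=> Av Au; have -> : twisted_conj (v * u) = u^-1 * twisted_conj v * (g * u * g^-1).
  by rewrite /twisted_conj invMg !mulgA mulgKV.
by rewrite (centsP cAA _ (groupVr Au) _ Av) -mulgA.
Qed.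

End TwistedConjugation.

Section ConjugationByPower.

Variables (gT : finGroupType) (x w : gT) (r : nat).
Hypothesis xw : x ^ w = x ^+ r.

Lemma conjXg_expn c b : (x ^+ c) ^ (w ^+ b) = x ^+ (c * r ^ b).
Proof.
elim: b => [|b IHb]; first by rewrite expg0 conjg1 expn0 muln1.
by rewrite expgSr conjgM IHb conjXg xw -expgM expnS mulnCA mulnA.
Qed.

Lemma cycle_join_norm : <[x]> <*> <[w]> \subset 'N(<[x]>).
Proof. by rewrite join_subG normG norms_cycle xw mem_cycle. Qed.

Lemma cycle_joinE : <[x]> <*> <[w]> = <[x]> * <[w]> :> {set gT}.
Proof. by rewrite norm_joinEr // norms_cycle xw mem_cycle. Qed.

Lemma cycle_joinEr : <[x]> <*> <[w]> = <[w]> * <[x]> :> {set gT}.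
Proof. by rewrite joingC norm_joinEl // norms_cycle xw mem_cycle. Qed.

Lemma twisted_conj_expW c d b :
  twisted_conj (x ^+ c * w ^+ d) (w ^+ b) = x ^+ (c * r ^ b) * (x ^+ c)^-1.
Proof.
have cWW : commute (w ^+ d) (w ^+ b) by apply: commuteX2.
rewrite -conjXg_expn /twisted_conj conjgE !invMg !mulgA -(mulgA _ (w ^+ d)) cWW.
by rewrite !mulgA mulgK.
Qed.

Lemma twisted_class_inner_group_set g :
    (forall b1 b2, exists b3, r ^ b1 + r ^ b2 = r ^ b3 + 1 %[mod #[x]]) ->
    g \in <[x]> <*> <[w]> ->
  group_set (twisted_class_inner (<[x]> <*> <[w]>) g).
Proof.
move=> r_add Gg; have nXg := subsetP cycle_join_norm g Gg.
have cXX := cycle_abelian x; pose chi := twisted_conj g.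
have chiX u : u \in <[x]> -> chi u \in <[x]> by apply: twisted_conj_mem.
have chiM v u : chi v \in <[x]> -> u \in <[x]> -> chi (v * u) = chi v * chi u.
  exact: twisted_conjM.
have /mulsgP[_ _ /cycleP[c ->] /cycleP[d ->] gE] : g \in <[x]> * <[w]>.
  by rewrite -cycle_joinE.
have chiW b : chi (w ^+ b) \in <[x]>.
  by rewrite /chi gE twisted_conj_expW groupM ?groupV ?mem_cycle.
have chiW_mul b1 b2 : exists b3, chi (w ^+ b1) * chi (w ^+ b2) = chi (w ^+ b3).
  have [b3 r_b3] := r_add b1 b2; exists b3; rewrite /chi gE !twisted_conj_expW mulgA.
  rewrite -(mulgA _ _ (x ^+ _)) (centsP cXX _ (groupVr (mem_cycle _ _))) ?mem_cycle //.
  rewrite mulgA -expgD -mulnDr.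
  have -> : x ^+ (c * (r ^ b1 + r ^ b2)) = x ^+ (c * r ^ b3) * x ^+ c.
    by apply/eqP; rewrite -expgD -mulnSr eq_expg_mod_order -modnMmr r_b3 addn1 modnMmr.
  by rewrite mulgK.
apply/group_setP; split.
  by apply/imsetP; exists 1; rewrite ?group1 // invg1 mul1g mulg1 mulgV.
move=> _ _ /imsetP[z1 + ->] /imsetP[z2 + ->]; rewrite cycle_joinEr.
move=> /mulsgP[_ u1 /cycleP[b1 ->] Xu1 ->] /mulsgP[_ u2 /cycleP[b2 ->] Xu2 ->].
have [b3 chiW3] := chiW_mul b1 b2.
apply/imsetP; exists (w ^+ b3 * (u1 * u2)); first by rewrite mem_mulg ?mem_cycle ?groupM.
rewrite -!/(twisted_conj g _) -!/(chi _) (chiM _ _ (chiW b1) Xu1) (chiM _ _ (chiW b2) Xu2).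
rewrite (chiM _ _ (chiW b3) (groupM Xu1 Xu2)) (chiM _ _ (chiX _ Xu1) Xu2).
have cXW := centsP cXX _ (chiX _ Xu1) _ (chiW b2).
move: cXW chiW3; set a1 := chi (w ^+ b1); set a2 := chi (w ^+ b2).
set a3 := chi (w ^+ b3); set c1 := chi u1 => cXW <-.
by rewrite -[LHS]mulgA (mulgA c1) cXW !mulgA.
Qed.

End ConjugationByPower.

Section LowerCentralSeriesPowers.

Variables (gT : finGroupType) (G : {group gT}) (x w : gT) (p : nat).
Hypotheses (Gx : x \in G) (Gw : w \in G) (xw : x ^ w = x ^+ p.+1).

Lemma commXg_expS m : [~ x ^+ m, w] = x ^+ (m * p).
Proof.
by rewrite commgEl -[w]expg1 (conjXg_expn xw) expn1 mulnS expgD mulKg.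
Qed.

Lemma expX_mem_lcn k : x ^+ (p ^ k) \in 'L_k.+1(G).
Proof.
elim: k => [|k IHk]; first by rewrite lcn1 expn0 expg1.
by rewrite lcnSn expnSr -commXg_expS mem_commg.
Qed.

Lemma nil_class_gt k : nilpotent G -> x ^+ (p ^ k) != 1 -> k < nil_class G.
Proof.
move=> nilG; apply: contraR; rewrite -leqNgt => /(lcn_nil_classP k nilG) L1.
by have := expX_mem_lcn k; rewrite L1 inE.
Qed.

End LowerCentralSeriesPowers.

(* [Extremal.Grp] presents G(p,n) with [x ^ y = y^-1 * x * y]; replacing [y]
   by [y^-1] passes between the two presentations. *)
Lemma homg_Grp_conjV (gT : finGroupType) (H : {set gT}) (q P r : nat) :
  (H \homg Grp (x : y : x ^+ q, y ^+ P, y * x * y^-1 = x ^+ r)) =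
  (H \homg Grp (x : y : x ^+ q, y ^+ P, x ^ y = x ^+ r)).
Proof.
apply/existsP/existsP => -[[x y]] /= /eqP[defH xq yP xy]; exists (x, y^-1);
  rewrite /= !xpair_eqE cycleV defH xq expgVn yP invg1 -xy conjgE ?invgK;
  by rewrite ?mulgA !eqxx.
Qed.

Section MetacyclicPGroup.

Variables (p n : nat) (gT : finGroupType) (G : {group gT}).
Hypotheses (p_pr : prime p) (p_odd : odd p) (n_gt1 : 1 < n).
Hypothesis isoG :
  G \isog Grp (x : y : x ^+ (p ^ n)%N, y ^+ (p ^ n.-1)%N, y * x * y^-1 = x ^+ p.+1).

Let p_gt1 : 1 < p := prime_gt1 p_pr.

Lemma card_Gpn : #|G| = (p ^ n.-1 * p ^ n)%N.
Proof.
have pn_gt1 k : 0 < k -> 1 < p ^ k by move=> k_gt0; rewrite -(expn0 p) ltn_exp2l.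
have [s [As os sb]] := Aut_Zp1_expS p_pr p_odd n_gt1.
have pn1_gt1 : 1 < p ^ n.-1 by rewrite pn_gt1 // ltn_predRL.
have pn_gt1' : 1 < p ^ n by rewrite pn_gt1 // ltnW.
have s_dvd : #[s] %| p ^ n.-1 by rewrite os.
have isoE := Extremal.Grp pn1_gt1 pn_gt1' (ex_intro _ s (And3 As s_dvd sb)).
rewrite -(@Extremal.card (p ^ n) _ p.+1 pn1_gt1 pn_gt1'); apply/esym/card_isog.
rewrite isogEhom; apply/andP; split.
  by rewrite isoG homg_Grp_conjV isoGrp_hom.
by rewrite isoE -homg_Grp_conjV isoGrp_hom.
Qed.

Lemma Gpn_generators :
  exists x w : gT, [/\ <[x]> <*> <[w]> = G, #[x] = (p ^ n)%N & x ^ w = x ^+ p.+1].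
Proof.
have /existsP[[x w] /= /eqP[defG xq wq xw]] :
    G \homg Grp (x : y : x ^+ (p ^ n)%N, y ^+ (p ^ n.-1)%N, x ^ y = x ^+ p.+1).
  by rewrite -homg_Grp_conjV isoGrp_hom.
exists x, w; split=> //.
have pk_gt0 k : 0 < p ^ k by rewrite expn_gt0 prime_gt0.
have le_x : #[x] <= p ^ n by rewrite dvdn_leq // order_dvdn xq.
have le_w : #[w] <= p ^ n.-1 by rewrite dvdn_leq // order_dvdn wq.
have : (p ^ n.-1 * p ^ n)%N <= #[x] * #[w].
  rewrite -card_Gpn dvdn_leq ?muln_gt0 ?order_gt0 // -defG (cycle_joinE xw).
  by rewrite /order mul_cardG dvdn_mulr.
move: le_x le_w (pk_gt0 n.-1); clear; nia.
Qed.

Lemma Gpn_nilpotent : nilpotent G.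
Proof. by apply: (@pgroup_nil _ p); rewrite /pgroup card_Gpn -expnD pnatX pnat_id. Qed.

Lemma Gpn_nil_class : n.-1 <= nil_class G.
Proof.
have [x [w [defG ox xw]]] := Gpn_generators.
have [Gx Gw] : x \in G /\ w \in G by rewrite -defG !mem_gen ?inE ?cycle_id ?orbT.
suff : n.-2 < nil_class G by lia.
apply: nil_class_gt Gx Gw xw _ Gpn_nilpotent _.
by rewrite -order_dvdn ox dvdn_Pexp2l // -ltnNge; lia.
Qed.

Lemma Gpn_twisted_class_inner g : g \in G -> group_set (twisted_class_inner G g).
Proof.
have [x [w [<- ox xw]]] := Gpn_generators.
have r_add b1 b2 : exists b3, p.+1 ^ b1 + p.+1 ^ b2 = p.+1 ^ b3 + 1 %[mod #[x]].
  by rewrite ox; exact: expS_addn_mod.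
exact: twisted_class_inner_group_set xw g r_add.
Qed.

End MetacyclicPGroup.

Section UnrestrictedProduct.

Variable hT : nat -> finGroupType.
Local Notation T := (dprodT hT).
Local Notation mul := (@dprod_mul hT).
Local Notation inv := (@dprod_inv hT).
Local Notation one := (@dprod_one hT).

Lemma acomm_dprodE (f g : T) i : acomm mul inv f g i = [~ f i, g i].
Proof. by rewrite /acomm /dprod_mul /dprod_inv commgEl conjgE !mulgA. Qed.

Lemma lcs_dprod_mem k (f : T) :
  lcs mul inv one k f -> forall i, f i \in 'L_k.+1([set: hT i]).
Proof.
elim: k f => [|k IHk] f /=; first by move=> _ i; rewrite lcn1 inE.
elim=> [|_ [a [b [Lka ->]]]|f1 f2 _ IH1 _ IH2|f1 _ IH1] i.
- exact: group1.
- by rewrite acomm_dprodE lcnSn mem_commg ?IHk ?inE.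
- exact: groupM (IH1 i) (IH2 i).
- exact: groupVr (IH1 i).
Qed.

Lemma dprod_residually_nilpotent :
  (forall i, nilpotent [set: hT i]) -> aresidually_nilpotent mul inv one.
Proof.
move=> nilT f Lf; apply: functional_extensionality_dep => i.
have L1 : 'L_(nil_class [set: hT i]).+1([set: hT i]) = 1.
  exact/(lcn_nil_classP _ (nilT i)).
by have := lcs_dprod_mem (Lf (nil_class [set: hT i])) i; rewrite L1 inE => /eqP.
Qed.

Definition dprod_emb i (a : hT i) : T := dfwith one a.

Lemma dprod_embM i (a b : hT i) : mul (dprod_emb a) (dprod_emb b) = dprod_emb (a * b).
Proof.
apply: functional_extensionality_dep => j; rewrite /dprod_mul /dprod_emb.
by case: (eqVneq i j) => [<-|ij]; rewrite ?dfwith_in ?dfwith_out ?mulg1.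
Qed.

Lemma dprod_embV i (a : hT i) : inv (dprod_emb a) = dprod_emb a^-1.
Proof.
apply: functional_extensionality_dep => j; rewrite /dprod_inv /dprod_emb.
by case: (eqVneq i j) => [<-|ij]; rewrite ?dfwith_in ?dfwith_out ?invg1.
Qed.

Lemma dprod_emb1 i : dprod_emb (1 : hT i) = one.
Proof.
apply: functional_extensionality_dep => j; rewrite /dprod_emb.
by case: (eqVneq i j) => [<-|ij]; rewrite ?dfwith_in ?dfwith_out.
Qed.

Lemma lcs_dprod_emb k i (a : hT i) :
  a \in 'L_k.+1([set: hT i]) -> lcs mul inv one k (dprod_emb a).
Proof.
elim: k a => [//|k IHk] a; rewrite lcnSn => /gen_prodgP[m [c Lc ->]].
apply: (big_rec (fun y => lcs mul inv one k.+1 (dprod_emb y))) => [|j y _ Ly].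
  by rewrite dprod_emb1; apply: agen_one.
rewrite -dprod_embM; apply: agen_mul Ly; apply: agen_in.
have /imset2P[u v Lu _ ->] := Lc j.
exists (dprod_emb u), (dprod_emb v); split; first exact: IHk.
by rewrite /acomm !dprod_embV !dprod_embM commgEl conjgE !mulgA.
Qed.

Lemma dprod_not_nilpotent :
  (forall k, exists i, 'L_k.+1([set: hT i]) != 1) -> ~ anilpotent mul inv one.
Proof.
move=> ntL [k Lk1]; have [i /trivgPn[a La nta]] := ntL k.
have /(congr1 (fun f => f i)) := Lk1 _ (lcs_dprod_emb La).
by rewrite /dprod_emb dfwith_in => /eqP; rewrite (negbTE nta).
Qed.

Lemma twisted_class_e_dprodP (g f : T) :
  twisted_class_e mul inv (ainner mul inv g) f <->
  forall i, f i \in twisted_class_inner [set: hT i] (g i).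
Proof.
split=> [[z ->] i | Sf].
  exact: (imset_f (fun z => z^-1 * (g i * z * (g i)^-1))).
pose z i := odflt 1 [pick z : hT i | f i == z^-1 * (g i * z * (g i)^-1)].
exists z; apply: functional_extensionality_dep => i.
rewrite /dprod_mul /dprod_inv /ainner /z /=.
case: pickP => [z' /eqP // | no_z].
by have /imsetP[z0 _ fz0] := Sf i; have := no_z z0; rewrite fz0 eqxx.
Qed.

Lemma dprod_twisted_class_e_subgroup (g : T) :
    (forall i, group_set (twisted_class_inner [set: hT i] (g i))) ->
  is_subgroup mul inv one (twisted_class_e mul inv (ainner mul inv g)).
Proof.
move=> grS; pose S i := Group (grS i).
split=> [|f1 f2 /twisted_class_e_dprodP S1 /twisted_class_e_dprodP S2
        | f /twisted_class_e_dprodP Sf]; apply/twisted_class_e_dprodP => i.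
- exact: (group1 (S i)).
- exact: (groupM (G := S i)).
- exact: (groupVr (G := S i)).
Qed.

End UnrestrictedProduct.

Lemma next_primeP m : prime (next_prime m) /\ m < next_prime m.
Proof. by rewrite /next_prime; case: ex_minnP => q /andP[]. Qed.

Lemma nth_prime_gt k : k < nth_prime k.
Proof.
elim: k => [//|k IHk] /=; have [_] := next_primeP (nth_prime k).
exact: leq_ltn_trans.
Qed.

Lemma nth_prime_prime k : prime (nth_prime k.+1).
Proof. exact: (next_primeP _).1. Qed.

Theorem mainTheorem14 :
  (forall (p n : nat), prime p -> 2 < p -> 2 < n ->
   forall (gT : finGroupType) (G : {group gT}),
     G \isog Grp (x : y : x ^+ (p ^ n)%N, y ^+ (p ^ n.-1)%N,
                           y * x * y^-1 = x ^+ p.+1) ->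
     [/\ nilpotent G, n.-1 <= nil_class G &
         forall g, g \in G -> group_set (twisted_class_inner G g)])
  /\
  (forall (gT : nat -> finGroupType),
     (forall k : nat, [set: gT k.+3] \isog
        Grp (x : y : x ^+ (nth_prime k.+3 ^ k.+3)%N,
                      y ^+ (nth_prime k.+3 ^ (k.+3).-1)%N,
                      y * x * y^-1 = x ^+ (nth_prime k.+3).+1)) ->
     let T := dprodT (fun k => gT k.+3) in
     let mul := @dprod_mul (fun k => gT k.+3) in
     let inv := @dprod_inv (fun k => gT k.+3) in
     let one := @dprod_one (fun k => gT k.+3) in
     [/\ aresidually_nilpotent mul inv one,
         ~ anilpotent mul inv one &
         forall g : T, is_subgroup mul inv one
                         (twisted_class_e mul inv (ainner mul inv g))]).
Proof.
have Gpn p n : prime p -> 2 < p -> 2 < n -> forall gT (G : {group gT}),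
    G \isog Grp (x : y : x ^+ (p ^ n)%N, y ^+ (p ^ n.-1)%N, y * x * y^-1 = x ^+ p.+1) ->
  [/\ nilpotent G, n.-1 <= nil_class G &
      forall g, g \in G -> group_set (twisted_class_inner G g)].
- move=> p_pr p_gt2 n_gt2 gT G isoG.
  have p_odd : odd p by case: (even_prime p_pr) p_gt2 => [->|].
  have n_gt1 := ltnW n_gt2.
  split; [exact: Gpn_nilpotent isoG | exact: Gpn_nil_class isoG | ].
  exact: Gpn_twisted_class_inner isoG.
split; first exact: Gpn.
move=> gT isoG T mul inv one.
have p_gt2 k : 2 < nth_prime k.+3 by apply: ltn_trans (nth_prime_gt k.+3).
have {}Gpn k := Gpn _ k.+3 (nth_prime_prime k.+2) (p_gt2 k) isT _ _ (isoG k).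
split.
- by apply: dprod_residually_nilpotent => k; case: (Gpn k).
- apply: dprod_not_nilpotent => k; exists k; have [nilG classG _] := Gpn k.
  by apply/eqP => /(lcn_nil_classP k nilG); move: classG; clear; lia.
- by move=> g; apply: dprod_twisted_class_e_subgroup => k; case: (Gpn k) => _ _ ->; rewrite ?inE.
Qed.
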